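(* The synchronous nonlinear fixed-point iteration $\mathbf{x}^{p+1} = \mathbf{h}(\mathbf{x}^p)$ is locally convergent, that is, if $\mathbf{x}_*$ is a fixed point of $\mathbf{h}$, it is a point of attraction of the synchronous iteration.
   Context: Let $\mathbf{A}\in\mathbb{R}^{n\times n}$ be partitioned into square $b\times b$ blocks, and $S_B$ a set of block indices containing all diagonal blocks. The unknowns (entries of the block ILU factors $\mathbf{L}_{ij}$, $i>j$, and $\mathbf{U}_{ij}$, $i\le j$, for $(i,j)\in S_B$) form $\mathbf{x}\in\mathbb{R}^m$, $m=|S_B|b^2$, with $\mathbf{X}_{ij}$ the $b\times b$ block for index $(i,j)$. The map $\mathbf{h}:D_B\to\mathbb{R}^m$ is given blockwise by $\mathbf{H}_{ij}(\mathbf{x})=(\mathbf{A}_{ij}-\sum_{k=1}^{j-1}\mathbf{X}_{ik}\mathbf{X}_{kj})\mathbf{X}_{jj}^{-1}$ for $i>j$ and $\mathbf{H}_{ij}(\mathbf{x})=\mathbf{A}_{ij}-\sum_{k=1}^{i-1}\mathbf{X}_{ik}\mathbf{X}_{kj}$ for $i\le j$, on $D_B:=\{\mathbf{x}: \mathbf{X}_{jj}\text{ nonsingular for all diagonal blocks}\}$. Its fixed points are the block ILU factorizations with pattern $S_B$. *)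

From HB Require Import structures.
From mathcomp Require Import all_boot all_order all_algebra.
From mathcomp Require Import all_classical all_reals all_analysis.
Set Implicit Arguments. Unset Strict Implicit. Unset Printing Implicit Defensive.
Import Order.TTheory GRing.Theory Num.Theory.
Import numFieldNormedType.Exports.
Local Open Scope ring_scope.
Local Open Scope classical_set_scope.

(* Block indices: 'I_N x 'I_N (0-based).  The sparsity pattern S_B is a set of
   block indices; the unknowns are the b x b blocks X_ij, (i,j) \in S_B. *)
Definition bidx (N : nat) (SB : {set 'I_N * 'I_N}) : Type :=
  {ij : 'I_N * 'I_N | ij \in SB}.

(* The unknown vector x in R^m, m = |S_B| b^2, as a family of b x b blocks. *)
Definition bstate (R : realType) (N b : nat) (SB : {set 'I_N * 'I_N}) :=
  bidx SB -> 'M[R]_b.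

(* X_ik : the block of x at (i,k) if (i,k) \in S_B, and 0 otherwise
   (entries outside the pattern of the ILU factors vanish). *)
Definition blk (R : realType) (N b : nat) (SB : {set 'I_N * 'I_N})
    (x : bstate R b SB) (i k : 'I_N) : 'M[R]_b :=
  match (insub (i, k) : option (bidx SB)) with
  | Some s => x s
  | None => 0
  end.

Definition hmap (R : realType) (N b : nat) (A : 'I_N -> 'I_N -> 'M[R]_b)
    (SB : {set 'I_N * 'I_N}) (x : bstate R b SB) : bstate R b SB :=
  fun s =>
    let i := (val s).1 in let j := (val s).2 in
    if (j < i)%N then
      (A i j - \sum_(k < N | (k < j)%N) (blk x i k *m blk x k j))
        *m invmx (blk x j j)
    else
      A i j - \sum_(k < N | (k < i)%N) (blk x i k *m blk x k j).

Definition in_DB (R : realType) (N b : nat) (SB : {set 'I_N * 'I_N})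
    (x : bstate R b SB) : Prop :=
  forall j : 'I_N, blk x j j \in unitmx.

(* x* is a point of attraction of the iteration x^{p+1} = G(x^p) on domain D
   (Ortega--Rheinboldt): there is an open neighbourhood of x* (here a ball
   for the max-norm over all entries, which is no loss of generality in
   finite dimension) such that for every starting point in it the iterates
   are well defined (stay in D) and converge to x*. *)
Definition point_of_attraction (R : realType) (I : Type) (b : nat)
    (G : (I -> 'M[R]_b) -> (I -> 'M[R]_b)) (D : (I -> 'M[R]_b) -> Prop)
    (xs : I -> 'M[R]_b) : Prop :=
  exists2 delta : R, 0 < delta &
    forall x0 : I -> 'M[R]_b,
      (forall s i j, `|x0 s i j - xs s i j| < delta) ->
      (forall p : nat, D (iter p G x0)) /\
      (forall s i j, (fun p : nat => iter p G x0 s i j) @ \oo --> xs s i j).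

From HB Require Import structures.
From mathcomp Require Import all_boot all_order all_algebra zify.
From mathcomp Require Import all_classical all_reals all_analysis.
Import numFieldNormedType.Exports.
Import Order.TTheory GRing.Theory Num.Theory.
Local Open Scope ring_scope.
Local Open Scope classical_set_scope.
Set Implicit Arguments. Unset Strict Implicit. Unset Printing Implicit Defensive.

(* Every block of h(x) is a polynomial in the entries of x, possibly
   multiplied by the inverse of a diagonal block; by Cramer's rule h is
   therefore continuous at every point of D_B, and D_B is a neighbourhood of
   each of its points.  Hence for each fixed p the iterate h^p maps points
   close enough to the fixed point x* into D_B.  On the other hand the
   iteration terminates: block (i,j) of h(x) only reads blocks of strictly
   smaller level, where L_ij has level 2j+1 and U_ij level 2i, so after 2N
   sweeps every iterate equals x*, whatever the starting point. *)

Section EntrywiseLimits.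
Variables (R : realType) (T : Type) (F : set_system T).
Context {FF : Filter F}.

Definition mxcvg m n (M : T -> 'M[R]_(m, n)) (L : 'M[R]_(m, n)) :=
  forall i j, M x i j @[x --> F] --> L i j.

Lemma mxcvg_cst m n (L : 'M[R]_(m, n)) : mxcvg (fun=> L) L.
Proof. by move=> i j; apply: cvg_cst. Qed.

Lemma mxcvgB m n (M P : T -> 'M[R]_(m, n)) LM LP :
  mxcvg M LM -> mxcvg P LP -> mxcvg (fun x => M x - P x) (LM - LP).
Proof.
move=> ML PL i j; under eq_cvg do rewrite !mxE.
by rewrite !mxE; apply: cvgB.
Qed.

Lemma mxcvg_sum m n (I : Type) (r : seq I) (P : pred I)
    (M : I -> T -> 'M[R]_(m, n)) (L : I -> 'M[R]_(m, n)) :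
  (forall k, mxcvg (M k) (L k)) ->
  mxcvg (fun x => \sum_(k <- r | P k) M k x) (\sum_(k <- r | P k) L k).
Proof.
move=> ML i j; under eq_cvg do rewrite summxE; rewrite summxE.
by apply: (cvg_big add_continuous) => k _; apply: ML.
Qed.

Lemma mxcvgM m n p (M : T -> 'M[R]_(m, n)) (P : T -> 'M[R]_(n, p)) LM LP :
  mxcvg M LM -> mxcvg P LP -> mxcvg (fun x => M x *m P x) (LM *m LP).
Proof.
move=> ML PL i j; under eq_cvg do rewrite mxE; rewrite mxE.
by apply: (cvg_big add_continuous) => k _; apply: cvgM.
Qed.

Lemma cvg_det n (M : T -> 'M[R]_n) L : mxcvg M L -> \det (M x) @[x --> F] --> \det L.
Proof.
move=> ML; apply: (cvg_big add_continuous) => s _.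
apply: cvgM; first exact: cvg_cst.
by apply: (cvg_big mul_continuous) => i _; apply: ML.
Qed.

Lemma mxcvg_adj n (M : T -> 'M[R]_n) L :
  mxcvg M L -> mxcvg (fun x => \adj (M x)) (\adj L).
Proof.
move=> ML i j; under eq_cvg do rewrite mxE; rewrite mxE.
apply: cvgM; first exact: cvg_cst.
by apply: cvg_det => a c; under eq_cvg do rewrite !mxE; rewrite !mxE; apply: ML.
Qed.

Lemma mxcvgV n (M : T -> 'M[R]_n) L :
  mxcvg M L -> L \in unitmx -> mxcvg (fun x => invmx (M x)) (invmx L).
Proof.
move=> ML L_unit i j.
have detL_neq0 : \det L != 0 by rewrite -unitfE -unitmxE.
apply: (@cvg_trans _ (((\det (M x))^-1 * \adj (M x) i j) @[x --> F])).
  apply: near_eq_cvg; near=> x; rewrite /invmx ifT ?mxE //.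
  by rewrite unitmxE unitfE; near: x; apply: cvgr_neq0 (cvg_det ML) detL_neq0.
rewrite /invmx L_unit mxE; apply: cvgM; first exact: cvgV (cvg_det ML).
exact: mxcvg_adj.
Unshelve. all: by end_near.
Qed.

End EntrywiseLimits.

Section EntrywiseNbhs.
Variables (R : realType) (I : finType) (b : nat) (xs : I -> 'M[R]_b).

Definition entry_ball (d : R) : set (I -> 'M[R]_b) :=
  [set x | forall s i j, `|x s i j - xs s i j| < d].

Definition entry_nbhs := filter_from [set d : R | 0 < d] entry_ball.

Global Instance entry_nbhs_filter : Filter entry_nbhs.
Proof.
apply: filter_from_filter; first by exists 1; rewrite /= ltr01.
move=> d1 d2 d1_gt0 d2_gt0; exists (Num.min d1 d2); first by rewrite /= lt_min d1_gt0.
by move=> x x_near; split=> s i j; rewrite (lt_le_trans (x_near s i j)) ?ge_min ?lexx ?orbT.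
Qed.

Lemma cvg_entry s i j : (fun x => x s i j) @ entry_nbhs --> xs s i j.
Proof.
apply/cvgrPdist_lt => e e_gt0; exists e => // x x_near.
by rewrite /= distrC; apply: x_near.
Qed.

Lemma entry_nbhs_cvg (T : Type) (F : set_system T) {FF : Filter F}
    (f : T -> I -> 'M[R]_b) :
  (forall s, mxcvg F (fun x => f x s) (xs s)) -> f @ F `=>` entry_nbhs.
Proof.
move=> fL; apply/filter_fromP => d d_gt0.
have : \forall x \near F, forall t : I * 'I_b * 'I_b,
    `|f x t.1.1 t.1.2 t.2 - xs t.1.1 t.1.2 t.2| < d.
  apply: filter_forall => -[[s i] j]; near=> x; rewrite distrC /=.
  by near: x; apply: cvgr_dist_lt (fL s i j) _ d_gt0.
by apply: filterS => x near_x s i j; apply: (near_x (s, i, j)).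
Unshelve. all: by end_near.
Qed.

End EntrywiseNbhs.

Lemma iter_cvg_to (T : Type) (F : set_system T) (f : T -> T) p :
  f @ F `=>` F -> iter p f @ F `=>` F.
Proof. by move=> fF; elim: p => [|p IHp] //; apply: cvg_comp IHp fF. Qed.

Section BlockILU.
Variables (R : realType) (N b : nat) (A : 'I_N -> 'I_N -> 'M[R]_b)
  (SB : {set 'I_N * 'I_N}).
Local Notation h := (@hmap R N b A SB).

Lemma blk_cvg (xs : bstate R b SB) i k :
  mxcvg (entry_nbhs xs) (fun x => blk x i k) (blk xs i k).
Proof. by rewrite /blk; case: insubP => [s _ _|_]; [apply: cvg_entry|apply: mxcvg_cst]. Qed.

Lemma hmap_cvg (xs : bstate R b SB) :
  in_DB xs -> h @ entry_nbhs xs `=>` entry_nbhs (h xs).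
Proof.
move=> xs_DB; apply: entry_nbhs_cvg => s.
have residual_cvg i j m : mxcvg (entry_nbhs xs)
    (fun x => A i j - \sum_(k < N | (k < m)%N) (blk x i k *m blk x k j))
    (A i j - \sum_(k < N | (k < m)%N) (blk xs i k *m blk xs k j)).
  by apply: mxcvgB; [apply: mxcvg_cst|apply: mxcvg_sum => k; apply: mxcvgM; apply: blk_cvg].
rewrite /hmap; case: ifP => _; last exact: residual_cvg.
by apply: mxcvgM; [apply: residual_cvg|apply: mxcvgV; [apply: blk_cvg|apply: xs_DB]].
Qed.

Lemma in_DB_near (xs : bstate R b SB) :
  in_DB xs -> \forall x \near entry_nbhs xs, in_DB x.
Proof.
move=> xs_DB; apply: filter_forall => j; near do rewrite unitmxE unitfE.
apply: cvgr_neq0; first by apply: cvg_det; apply: blk_cvg.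
by rewrite -unitfE -unitmxE.
Unshelve. all: by end_near.
Qed.

Definition ilu_level (ij : 'I_N * 'I_N) : nat :=
  if (ij.2 < ij.1)%N then (ij.2 * 2).+1 else (ij.1 * 2)%N.

Lemma iter_hmap_exact (xs : bstate R b SB) : h xs = xs ->
  forall p x s, (ilu_level (val s) < p)%N -> iter p h x s = xs s.
Proof.
move=> xs_fix; elim=> [|p IHp] x s //; rewrite iterS -[in RHS]xs_fix.
have blk_exact i k : (ilu_level (i, k) < p)%N -> blk (iter p h x) i k = blk xs i k.
  by rewrite /blk; case: insubP => [t _ t_ik|_] // lt_p; apply: IHp; rewrite t_ik.
case: s => -[i j] ij_SB; rewrite /hmap /ilu_level /=.
case: ifP => ji lt_p.
- congr ((_ - _) *m invmx _); last by apply: blk_exact; rewrite /ilu_level /= ltnn; lia.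
  by apply: eq_bigr => k k_lt; rewrite !blk_exact // /ilu_level /=; case: ifP => ?; lia.
- congr (_ - _); apply: eq_bigr => k k_lt.
  by rewrite !blk_exact // /ilu_level /=; case: ifP => ?; lia.
Qed.

Lemma iter_hmap_fixed (xs : bstate R b SB) p x :
  h xs = xs -> (N * 2 <= p)%N -> iter p h x = xs.
Proof.
move=> xs_fix le_p; apply/funext => -[[i j] ij_SB]; apply: iter_hmap_exact => //.
by rewrite /ilu_level /=; have := ltn_ord i; have := ltn_ord j; case: ifP => ?; lia.
Qed.

End BlockILU.

Theorem theorem5 (R : realType) (N b : nat) (A : 'I_N -> 'I_N -> 'M[R]_b)
    (SB : {set 'I_N * 'I_N})
    (hdiag : forall j : 'I_N, (j, j) \in SB)
    (xs : bstate R b SB) :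
  in_DB xs -> hmap A xs = xs ->
  point_of_attraction (@hmap R N b A SB) (@in_DB R N b SB) xs.
Proof.
move=> xs_DB xs_fix; set h := @hmap R N b A SB in xs_fix *.
have iter_cvg p : iter p h @ entry_nbhs xs `=>` entry_nbhs xs.
  by apply: iter_cvg_to; rewrite -{2}xs_fix; apply: hmap_cvg.
have : \forall x \near entry_nbhs xs, forall p : 'I_(N * 2), in_DB (iter p h x).
  by apply: filter_forall => p; apply: iter_cvg (in_DB_near xs_DB).
case=> d d_gt0 DB_iter; exists d => // x0 x0_near; split.
- move=> p; case: (ltnP p (N * 2)) => [lt_p|le_p].
    exact: (DB_iter x0 x0_near (Ordinal lt_p)).
  by rewrite (iter_hmap_fixed _ xs_fix le_p).
- move=> s i j; apply: cvg_near_cst; exists (N * 2)%N => // p /= le_p.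
  by rewrite (iter_hmap_fixed _ xs_fix le_p).
Qed.
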